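(* Let $\mathcal{E}_0=(E_0,\mathsf{Con}_0,\vdash_0)$ and $\mathcal{E}_1=(E_1,\mathsf{Con}_1,\vdash_1)$ be reversible event structures, and define $\mathcal{E}_0+\mathcal{E}_1=(E,\mathsf{Con},\vdash)$ as follows: - $E=\{(0,e)\mid e\in E_0\}\cup\{(1,e)\mid e\in E_1\}$, with injections $i_j:E_j\to E$, $i_j(e)=(j,e)$ for $j\in\{0,1\}$. - $X\in\mathsf{Con}$ iff $X=i_0(X_0)$ for some $X_0\in\mathsf{Con}_0$ or $X=i_1(X_1)$ for some $X_1\in\mathsf{Con}_1$. - $X\oslash Y\vdash(j,e)^*$ iff there are $X_j,Y_j\subseteq E_j$ with $X_j\oslash Y_j\vdash_j e^*$, $X=i_j(X_j)$, and $Y=i_j(Y_j)\cup(E\setminus i_j(E_j))$. Then $\mathcal{E}_0+\mathcal{E}_1$ is an RES, $i_0$ and $i_1$ are RES-morphisms, and $(\mathcal{E}_0+\mathcal{E}_1,i_0,i_1)$ is a coproduct of $\mathcal{E}_0$ and $\mathcal{E}_1$ in the category $\mathbf{RES}$.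
   Context: **Notation.** For a set $E$, write $\underline{E}=\{\underline{e}\mid e\in E\}$ for a disjoint set of formal ''reversal'' copies. $e^*$ denotes either $e$ (performing $e$) or $\underline{e}$ (reversing $e$); $(j,e)^*$ is $(j,e)$ or $\underline{(j,e)}$ correspondingly. For a partial function $f$ and a set $X$, write $f(X)=\{f(x)\mid x\in X,\ f(x)\text{ defined}\}$. $\bot$ denotes undefined. Writing $f(e)^*$ means $f(e)$ if $e^*=e$ and $\underline{f(e)}$ if $e^*=\underline{e}$. **Reversible event structures.** A reversible event structure (RES) is a triple $(E,\mathsf{Con},\vdash)$ where: - $E$ is a set of events. - $\mathsf{Con}$ is a set of finite subsets of $E$, closed under subsets. - ${\vdash}\subseteq\mathsf{Con}\times 2^E\times(E\cup\underline{E})$ is the enabling relation. We write $X\oslash Y\vdash e^*$ for $(X,Y,e^* )\in{\vdash}$. - The following axioms hold: 1. If $X\oslash Y\vdash e^*$ then $(X\cup\{e\})\cap Y=\emptyset$. 2. If $X\oslash Y\vdash\underline{e}$ then $e\in X$. 3. If $X\oslash Y\vdash e^*$, $X\subseteq X'\in\mathsf{Con}$ and $X'\cap Y=\emptyset$, then $X'\oslash Y\vdash e^*$. **RES-morphisms.** An RES-morphism $f:(E_0,\mathsf{Con}_0,\vdash_0)\to(E_1,\mathsf{Con}_1,\vdash_1)$ is a partial function $f:E_0\rightharpoonup E_1$ such that: - whenever $f(e)\neq\bot$ and $X\oslash Y\vdash_0 e^*$, there exists $Y_1\subseteq E_1$ such that every $e_0\in E_0$ with $f(e_0)\in Y_1$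 lies in $Y$, and $f(X)\oslash Y_1\vdash_1 f(e)^*$; - for every $X_0\in\mathsf{Con}_0$, $f(X_0)\in\mathsf{Con}_1$; - if $f(e)=f(e')\neq\bot$ and $e\neq e'$, then no $X\in\mathsf{Con}_0$ contains both $e$ and $e'$. $\mathbf{RES}$ is the category of RESs and RES-morphisms, with composition of partial functions. *)

From Stdlib Require Import List.

Definition fin_set {T : Type} (X : T -> Prop) : Prop :=
  exists l : list T, forall x, X x -> In x l.

Definition subset {T : Type} (X Y : T -> Prop) : Prop := forall x, X x -> Y x.
Definition set_eq {T : Type} (X Y : T -> Prop) : Prop := forall x, X x <-> Y x.

(* e* : either performing e (Do e) or reversing e (Undo e, i.e. underline e). *)
Inductive act (T : Type) : Type :=
| Do : T -> act T
| Undo : T -> act T.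
Arguments Do {T} _.
Arguments Undo {T} _.

Definition act_ev {T : Type} (a : act T) : T :=
  match a with Do e => e | Undo e => e end.

Definition act_map {A B : Type} (f : A -> B) (a : act A) : act B :=
  match a with Do e => Do (f e) | Undo e => Undo (f e) end.

(* Raw data of a reversible event structure (E, Con, |-);
   [enab X Y a] stands for  X ⊘ Y ⊢ a. *)
Record RES : Type := mkRES {
  ev : Type;
  Con : (ev -> Prop) -> Prop;
  enab : (ev -> Prop) -> (ev -> Prop) -> act ev -> Prop
}.

Definition is_RES (R : RES) : Prop :=
  (forall X, Con R X -> fin_set X) /\
  (forall X X', Con R X -> subset X' X -> Con R X') /\
  (forall X Y a, enab R X Y a -> Con R X) /\
  (forall X Y a, enab R X Y a -> forall x, (X x \/ x = act_ev a) -> ~ Y x) /\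
  (forall X Y e, enab R X Y (Undo e) -> X e) /\
  (forall X Y a X', enab R X Y a -> subset X X' -> Con R X' ->
     (forall x, X' x -> ~ Y x) -> enab R X' Y a).

Definition pimage {A B : Type} (f : A -> option B) (X : A -> Prop) : B -> Prop :=
  fun y => exists x, X x /\ f x = Some y.

Definition is_morphism (R0 R1 : RES) (f : ev R0 -> option (ev R1)) : Prop :=
  (forall (a : act (ev R0)) (e' : ev R1) X Y,
     f (act_ev a) = Some e' -> enab R0 X Y a ->
     exists Y1 : ev R1 -> Prop,
       (forall e0 y, f e0 = Some y -> Y1 y -> Y e0) /\
       enab R1 (pimage f X) Y1 (act_map (fun _ => e') a)) /\
  (forall X0, Con R0 X0 -> Con R1 (pimage f X0)) /\
  (forall e e' y, f e = Some y -> f e' = Some y -> e <> e' ->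
     ~ (exists X, Con R0 X /\ X e /\ X e')).

Definition image {A B : Type} (f : A -> B) (X : A -> Prop) : B -> Prop :=
  fun y => exists x, X x /\ y = f x.

Definition is_inl {A B : Type} (x : A + B) : Prop :=
  match x with inl _ => True | inr _ => False end.
Definition is_inr {A B : Type} (x : A + B) : Prop :=
  match x with inl _ => False | inr _ => True end.

(* The sum E0 + E1; events (0,e) = inl e, (1,e) = inr e. *)
Definition sum_RES (R0 R1 : RES) : RES :=
  {| ev := (ev R0 + ev R1)%type;
     Con := fun X =>
       (exists X0, Con R0 X0 /\ set_eq X (image inl X0)) \/
       (exists X1, Con R1 X1 /\ set_eq X (image inr X1));
     enab := fun X Y a =>
       (exists X0 Y0 a0, enab R0 X0 Y0 a0 /\ a = act_map inl a0 /\
          set_eq X (image inl X0) /\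
          set_eq Y (fun x => image inl Y0 x \/ is_inr x)) \/
       (exists X1 Y1 a1, enab R1 X1 Y1 a1 /\ a = act_map inr a1 /\
          set_eq X (image inr X1) /\
          set_eq Y (fun x => image inr Y1 x \/ is_inl x)) |}.

Definition inj0 (R0 R1 : RES) : ev R0 -> option (ev (sum_RES R0 R1)) :=
  fun e => Some (inl e).
Definition inj1 (R0 R1 : RES) : ev R1 -> option (ev (sum_RES R0 R1)) :=
  fun e => Some (inr e).

Definition pcomp {A B C : Type} (g : B -> option C) (f : A -> option B) : A -> option C :=
  fun x => match f x with Some y => g y | None => None end.

(* Every consistent set and every enabling of E0 + E1 lives in a single summand: it is the
   image under i_j of one in E_j, with all events of the other summand added to the
   preventing set.  Hence the RES axioms of the sum, the morphism conditions for i_0 and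
   i_1, and those for the copairing [f0, f1] each reduce to the corresponding facts inside
   one summand, where the injection i_j is injective and the added events lie outside its
   range.  Uniqueness of the mediating morphism holds because i_0 and i_1 jointly cover E. *)

From Stdlib Require Import List.

Set Implicit Arguments.
Unset Strict Implicit.

Lemma act_ev_map {A B : Type} (f : A -> B) (a : act A) :
  act_ev (act_map f a) = f (act_ev a).
Proof. destruct a; reflexivity. Qed.

Lemma act_map_comp {A B C : Type} (f : A -> B) (g : B -> C) (a : act A) :
  act_map g (act_map f a) = act_map (fun x => g (f x)) a.
Proof. destruct a; reflexivity. Qed.

Lemma act_map_ev {A B : Type} (f : A -> B) (a : act A) :
  act_map (fun _ => f (act_ev a)) a = act_map f a.
Proof. destruct a; reflexivity. Qed.

Lemma fin_set_subset {T : Type} (X Y : T -> Prop) :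
  subset X Y -> fin_set Y -> fin_set X.
Proof. intros HXY [l Hl]. exists l. auto. Qed.

Lemma fin_set_image {A B : Type} (f : A -> B) (X : A -> Prop) :
  fin_set X -> fin_set (image f X).
Proof.
  intros [l Hl]. exists (map f l). intros y [x [Hx ->]]. apply in_map. auto.
Qed.

Section RESAxioms.
Variable R : RES.
Hypothesis HR : is_RES R.

Lemma con_fin X : Con R X -> fin_set X.
Proof. destruct HR as [HF _]. apply HF. Qed.

Lemma con_sub X X' : Con R X -> subset X' X -> Con R X'.
Proof. destruct HR as [_ [HS _]]. apply HS. Qed.

Lemma enab_con X Y a : enab R X Y a -> Con R X.
Proof. destruct HR as [_ [_ [HE _]]]. apply HE. Qed.

Lemma enab_disjoint X Y a x : enab R X Y a -> X x \/ x = act_ev a -> ~ Y x.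
Proof. destruct HR as [_ [_ [_ [H1 _]]]]. intros HE. exact (H1 X Y a HE x). Qed.

Lemma enab_undo X Y e : enab R X Y (Undo e) -> X e.
Proof. destruct HR as [_ [_ [_ [_ [H2 _]]]]]. apply H2. Qed.

Lemma enab_weaken X Y a X' :
  enab R X Y a -> subset X X' -> Con R X' -> (forall x, X' x -> ~ Y x) -> enab R X' Y a.
Proof. destruct HR as [_ [_ [_ [_ [_ H3]]]]]. apply H3. Qed.

Lemma enab_set_eq X Y a X' : enab R X Y a -> set_eq X X' -> enab R X' Y a.
Proof.
  intros HE HXX'. apply (enab_weaken HE).
  - intros x Hx. apply HXX'. exact Hx.
  - apply (con_sub (enab_con HE)). intros x Hx. apply HXX'. exact Hx.
  - intros x Hx. apply (enab_disjoint HE). left. apply HXX'. exact Hx.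
Qed.

End RESAxioms.

Definition summand_embedding {A S : Type} (j : A -> S) (out : S -> Prop) : Prop :=
  (forall e e', j e = j e' -> e = e') /\
  (forall e, ~ out (j e)) /\
  (forall x, (exists e, x = j e) \/ out x).

Lemma inl_summand_embedding (A B : Type) : summand_embedding (@inl A B) is_inr.
Proof.
  split; [|split].
  - intros e e' H. injection H. auto.
  - intros e H. exact H.
  - intros [e|e]; [left; exists e; reflexivity | right; exact I].
Qed.

Lemma inr_summand_embedding (A B : Type) : summand_embedding (@inr A B) is_inl.
Proof.
  split; [|split].
  - intros e e' H. injection H. auto.
  - intros e H. exact H.
  - intros [e|e]; [right; exact I | left; exists e; reflexivity].
Qed.

(* [Con] and [enab] of [sum_RES] are, definitionally, the disjunctions of these for the
   summands [inl, is_inr] and [inr, is_inl]. *)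
Definition con_image {S : Type} {R : RES} (j : ev R -> S) (X : S -> Prop) : Prop :=
  exists X0, Con R X0 /\ set_eq X (image j X0).

Definition enab_image {S : Type} {R : RES} (j : ev R -> S) (out : S -> Prop)
    (X Y : S -> Prop) (a : act S) : Prop :=
  exists X0 Y0 a0, enab R X0 Y0 a0 /\ a = act_map j a0 /\
    set_eq X (image j X0) /\ set_eq Y (fun x => image j Y0 x \/ out x).

Section Summand.
Variables (R : RES) (S : Type) (j : ev R -> S) (out : S -> Prop).

Lemma con_image_sub (P : S -> Prop) X :
  (forall e, P (j e)) -> con_image j X -> subset X P.
Proof. intros HP [X0 [_ HX]] x Hx. apply HX in Hx. destruct Hx as [e [_ ->]]. apply HP. Qed.

Hypothesis HR : is_RES R.
Hypothesis Hj : summand_embedding j out.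

Let j_inj : forall e e', j e = j e' -> e = e' := proj1 Hj.
Let out_j : forall e, ~ out (j e) := proj1 (proj2 Hj).
Let range_or_out : forall x, (exists e, x = j e) \/ out x := proj2 (proj2 Hj).

Lemma image_preimage X Z : subset X (image j Z) -> set_eq X (image j (fun e => X (j e))).
Proof.
  intros HXZ x; split.
  - intros Hx. destruct (HXZ x Hx) as [e [_ ->]]. exists e. auto.
  - intros [e [He ->]]. exact He.
Qed.

Lemma preimage_image_sub Z : subset (fun e => image j Z (j e)) Z.
Proof. intros e [e' [He' Heq]]. rewrite (j_inj Heq). exact He'. Qed.

Lemma con_image_fin X : con_image j X -> fin_set X.
Proof.
  intros [X0 [HC HX]]. apply (fin_set_subset (Y := image j X0)).
  - intros x Hx. apply HX. exact Hx.
  - exact (fin_set_image j (con_fin HR HC)).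
Qed.

Lemma con_image_subset X X' : con_image j X -> subset X' X -> con_image j X'.
Proof.
  intros [X0 [HC HX]] HX'X. exists (fun e => X' (j e)). split.
  - apply (con_sub HR HC). intros e He. apply preimage_image_sub, HX, HX'X, He.
  - apply (image_preimage (Z := X0)). intros x Hx. apply HX, HX'X, Hx.
Qed.

Lemma enab_image_con X Y a : enab_image j out X Y a -> con_image j X.
Proof.
  intros [X0 [Y0 [a0 [HE [_ [HX _]]]]]]. exists X0. exact (conj (enab_con HR HE) HX).
Qed.

Lemma enab_image_disjoint X Y a x :
  enab_image j out X Y a -> X x \/ x = act_ev a -> ~ Y x.
Proof.
  intros [X0 [Y0 [a0 [HE [-> [HX HY]]]]]] Hx HYx.
  rewrite act_ev_map in Hx.
  assert (Hj0 : exists e, x = j e /\ (X0 e \/ e = act_ev a0)).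
  { destruct Hx as [Hx| ->].
    - apply HX in Hx. destruct Hx as [e [He ->]]. eauto.
    - eauto. }
  destruct Hj0 as [e [-> He]].
  apply HY in HYx. destruct HYx as [HYx|HYx]; [|exact (out_j HYx)].
  apply (enab_disjoint HR HE He). apply preimage_image_sub, HYx.
Qed.

Lemma enab_image_undo X Y e : enab_image j out X Y (Undo e) -> X e.
Proof.
  intros [X0 [Y0 [[e0|e0] [HE [Ha [HX _]]]]]]; [discriminate|].
  injection Ha as ->. apply HX. exists e0. exact (conj (enab_undo HR HE) eq_refl).
Qed.

(* A set consistent in the sum but not in this summand lies in [out]; if it also avoids
   [out] it is empty, so its trace on the summand is trivially consistent. *)
Lemma con_preimage X0 X' :
  Con R X0 -> (con_image j X' \/ subset X' out) -> (forall x, X' x -> ~ out x) ->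
  Con R (fun e => X' (j e)).
Proof.
  intros HC0 [[Z [HZ HX']]|Hout] Hdisj.
  - apply (con_sub HR HZ). intros e He. apply preimage_image_sub, HX', He.
  - apply (con_sub HR HC0). intros e He. exfalso. exact (out_j (Hout _ He)).
Qed.

Lemma enab_image_weaken X Y a X' :
  enab_image j out X Y a -> subset X X' -> (con_image j X' \/ subset X' out) ->
  (forall x, X' x -> ~ Y x) -> enab_image j out X' Y a.
Proof.
  intros [X0 [Y0 [a0 [HE [Ha [HX HY]]]]]] HXX' HC' Hdisj.
  assert (Hout : forall x, X' x -> ~ out x).
  { intros x Hx Ho. apply (Hdisj x Hx), HY. right. exact Ho. }
  assert (HX'j : set_eq X' (image j (fun e => X' (j e)))).
  { apply (image_preimage (Z := fun _ => True)). intros x Hx.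
    destruct (range_or_out x) as [[e ->]|Ho]; [exists e; auto|contradiction (Hout x Hx Ho)]. }
  exists (fun e => X' (j e)), Y0, a0. split; [|exact (conj Ha (conj HX'j HY))].
  apply (enab_weaken HR HE).
  - intros e He. apply HXX', HX. exists e. auto.
  - exact (con_preimage (enab_con HR HE) HC' Hout).
  - intros e He HYe. apply (Hdisj (j e) He), HY. left. exists e. auto.
Qed.

Section Copair.
Variables (T : RES) (f : ev R -> option (ev T)) (h : S -> option (ev T)).
Hypothesis HT : is_RES T.
Hypothesis Hf : is_morphism R T f.
Hypothesis h_j : forall e, h (j e) = f e.

Lemma pimage_copair X X0 : set_eq X (image j X0) -> set_eq (pimage h X) (pimage f X0).
Proof.
  intros HX y; split.
  - intros [x [Hx Hy]]. apply HX in Hx. destruct Hx as [e [He ->]].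
    exists e. rewrite <- h_j. auto.
  - intros [e [He Hy]]. exists (j e). rewrite h_j. split; [apply HX; exists e|]; auto.
Qed.

Lemma copair_con X : con_image j X -> Con T (pimage h X).
Proof.
  intros [X0 [HC HX]]. destruct Hf as [_ [HfC _]].
  apply (con_sub HT (HfC _ HC)). intros y Hy. apply (pimage_copair HX). exact Hy.
Qed.

Lemma copair_enab a e' X Y :
  h (act_ev a) = Some e' -> enab_image j out X Y a ->
  exists Y1, (forall e0 y, h e0 = Some y -> Y1 y -> Y e0) /\
             enab T (pimage h X) Y1 (act_map (fun _ => e') a).
Proof.
  intros Hs [X0 [Y0 [a0 [HE [-> [HX HY]]]]]].
  rewrite act_ev_map, h_j in Hs.
  destruct Hf as [Hfe _]. destruct (Hfe a0 e' X0 Y0 Hs HE) as [Y1 [HY1 HE1]].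
  exists Y1. split.
  - intros x y Hx Hy. apply HY.
    destruct (range_or_out x) as [[e ->]|Ho]; [|right; exact Ho].
    left. exists e. split; [|reflexivity]. rewrite h_j in Hx. exact (HY1 e y Hx Hy).
  - rewrite act_map_comp. apply (enab_set_eq HT HE1).
    intros y. symmetry. apply (pimage_copair HX).
Qed.

Lemma copair_inj X x x' y :
  con_image j X -> X x -> X x' -> h x = Some y -> h x' = Some y -> x <> x' -> False.
Proof.
  intros [X0 [HC HX]] Hx Hx' Hy Hy' Hne.
  apply HX in Hx, Hx'. destruct Hx as [e [He ->]], Hx' as [e' [He' ->]].
  rewrite h_j in Hy, Hy'. destruct Hf as [_ [_ Hfi]].
  apply (Hfi e e' y Hy Hy'); [congruence|]. exists X0. auto.
Qed.

End Copair.
End Summand.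

Lemma pimage_Some_image (A B : Type) (j : A -> B) (X : A -> Prop) :
  set_eq (pimage (fun e => Some (j e)) X) (image j X).
Proof.
  intros x; split.
  - intros [e [He Heq]]. injection Heq as <-. exists e. auto.
  - intros [e [He ->]]. exists e. auto.
Qed.

Lemma injection_morphism (R T : RES) (j : ev R -> ev T) (out : ev T -> Prop) :
  summand_embedding j out ->
  (forall X, con_image j X -> Con T X) ->
  (forall X Y a, enab_image j out X Y a -> enab T X Y a) ->
  is_morphism R T (fun e => Some (j e)).
Proof.
  intros Hj HCon HEnab. split; [|split].
  - intros a e' X Y Hs HE. injection Hs as <-.
    exists (fun x => image j Y x \/ out x). split.
    + intros e0 y Hs [HY|Ho]; injection Hs as <-.
      * exact (preimage_image_sub Hj HY).
      * contradiction (proj1 (proj2 Hj) e0 Ho).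
    + apply HEnab. rewrite act_map_ev. exists X, Y, a.
      repeat split; try apply pimage_Some_image; auto.
  - intros X0 HC. apply HCon. exists X0. exact (conj HC (pimage_Some_image j X0)).
  - intros e e' y Hs Hs' Hne. exfalso. apply Hne, (proj1 Hj). congruence.
Qed.

Section Coproduct.
Variables R0 R1 : RES.
Hypothesis HR0 : is_RES R0.
Hypothesis HR1 : is_RES R1.

Let emb0 := inl_summand_embedding (ev R0) (ev R1).
Let emb1 := inr_summand_embedding (ev R0) (ev R1).

Lemma sum_is_RES : is_RES (sum_RES R0 R1).
Proof.
  split; [|split; [|split; [|split; [|split]]]].
  - intros X [HC|HC]; [exact (con_image_fin HR0 HC) | exact (con_image_fin HR1 HC)].
  - intros X X' [HC|HC] HX'X; [left|right].
    + exact (con_image_subset HR0 emb0 HC HX'X).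
    + exact (con_image_subset HR1 emb1 HC HX'X).
  - intros X Y a [HE|HE]; [left|right].
    + exact (enab_image_con HR0 HE).
    + exact (enab_image_con HR1 HE).
  - intros X Y a [HE|HE] x.
    + exact (enab_image_disjoint HR0 emb0 HE).
    + exact (enab_image_disjoint HR1 emb1 HE).
  - intros X Y e [HE|HE]; [exact (enab_image_undo HR0 HE) | exact (enab_image_undo HR1 HE)].
  - intros X Y a X' [HE|HE] HXX' HC' Hdisj; [left|right].
    + apply (enab_image_weaken HR0 emb0 HE HXX'); [|exact Hdisj].
      destruct HC' as [HC|HC]; [left; exact HC|right].
      exact (con_image_sub (P := is_inr) (j := inr) (fun _ => I) HC).
    + apply (enab_image_weaken HR1 emb1 HE HXX'); [|exact Hdisj].
      destruct HC' as [HC|HC]; [right|left; exact HC].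
      exact (con_image_sub (P := is_inl) (j := inl) (fun _ => I) HC).
Qed.

Lemma inj0_morphism : is_morphism R0 (sum_RES R0 R1) (inj0 R0 R1).
Proof. apply (injection_morphism (T := sum_RES R0 R1) emb0); intros; left; assumption. Qed.

Lemma inj1_morphism : is_morphism R1 (sum_RES R0 R1) (inj1 R0 R1).
Proof. apply (injection_morphism (T := sum_RES R0 R1) emb1); intros; right; assumption. Qed.

Definition sum_copair (C : Type) (f0 : ev R0 -> option C) (f1 : ev R1 -> option C)
    (x : ev (sum_RES R0 R1)) : option C :=
  match x with inl e => f0 e | inr e => f1 e end.

Lemma sum_copair_morphism (R : RES) f0 f1 :
  is_RES R -> is_morphism R0 R f0 -> is_morphism R1 R f1 ->
  is_morphism (sum_RES R0 R1) R (sum_copair f0 f1).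
Proof.
  intros HR Hf0 Hf1.
  split; [|split].
  - intros a e' X Y Hs [HE|HE].
    + exact (copair_enab emb0 HR Hf0 (fun _ => eq_refl) Hs HE).
    + exact (copair_enab emb1 HR Hf1 (fun _ => eq_refl) Hs HE).
  - intros X [HC|HC].
    + exact (copair_con HR Hf0 (fun _ => eq_refl) HC).
    + exact (copair_con HR Hf1 (fun _ => eq_refl) HC).
  - intros x x' y Hy Hy' Hne [X [[HC|HC] [Hx Hx']]].
    + exact (copair_inj Hf0 (fun _ => eq_refl) HC Hx Hx' Hy Hy' Hne).
    + exact (copair_inj Hf1 (fun _ => eq_refl) HC Hx Hx' Hy Hy' Hne).
Qed.

Lemma sum_copair_unique (C : Type) f0 f1 (h : ev (sum_RES R0 R1) -> option C) :
  (forall e, h (inl e) = f0 e) -> (forall e, h (inr e) = f1 e) ->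
  forall x, h x = sum_copair f0 f1 x.
Proof. intros H0 H1 [e|e]; [apply H0|apply H1]. Qed.

End Coproduct.

Theorem mainTheorem7 (R0 R1 : RES) :
  is_RES R0 -> is_RES R1 ->
  is_RES (sum_RES R0 R1) /\
  is_morphism R0 (sum_RES R0 R1) (inj0 R0 R1) /\
  is_morphism R1 (sum_RES R0 R1) (inj1 R0 R1) /\
  (forall (R : RES) (f0 : ev R0 -> option (ev R)) (f1 : ev R1 -> option (ev R)),
     is_RES R -> is_morphism R0 R f0 -> is_morphism R1 R f1 ->
     exists h : ev (sum_RES R0 R1) -> option (ev R),
       is_morphism (sum_RES R0 R1) R h /\
       (forall e, pcomp h (inj0 R0 R1) e = f0 e) /\
       (forall e, pcomp h (inj1 R0 R1) e = f1 e) /\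
       (forall h' : ev (sum_RES R0 R1) -> option (ev R),
          is_morphism (sum_RES R0 R1) R h' ->
          (forall e, pcomp h' (inj0 R0 R1) e = f0 e) ->
          (forall e, pcomp h' (inj1 R0 R1) e = f1 e) ->
          forall x, h' x = h x)).
Proof.
  intros HR0 HR1.
  split; [exact (sum_is_RES HR0 HR1)|].
  split; [exact (inj0_morphism R0 R1)|].
  split; [exact (inj1_morphism R0 R1)|].
  intros R f0 f1 HR Hf0 Hf1.
  exists (sum_copair f0 f1).
  split; [exact (sum_copair_morphism HR Hf0 Hf1)|].
  split; [reflexivity|]. split; [reflexivity|].
  intros h' _ H0 H1. exact (sum_copair_unique H0 H1).
Qed.
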